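(* Let $S\subseteq\mathbb{R}^{n-1}$ and let $P\in\mathbb{R}[\mathbf{x};x_n]$ have degree $d_n$ in $x_n$, $P(\mathbf{x},x_n)=\sum_{k=0}^{d_n}c_k(\mathbf{x})x_n^k$. Suppose there exists $k\in\{0,\dots,d_n\}$ such that for all $\mathbf{x}\in S$: $c_{d_n-k}(\mathbf{x})\neq0$ and $c_{d_n-j}(\mathbf{x})=0$ for all integers $0\le j\le k-1$. Then $P$ is projectively delineable on $S$ if and only if $P$ is delineable on $S$.
   Context: Write $\mathbf{x}=(x_1,\dots,x_{n-1})$; for $\mathbf{x}_0\in\mathbb{R}^{n-1}$, $E_{\mathbf{x}_0}P$ is the univariate polynomial in $x_n$ obtained by substituting $\mathbf{x}_0$ for $\mathbf{x}$. $\mathbb{RP}^1$ is the quotient of $\mathbb{R}^2\setminus\{(0,0)\}$ by proportionality, with quotient topology; $(u:v)$ denotes the class of $(u,v)$; $\infty=(1:0)$. The homogenization of $P$ with respect to $d=\deg_{x_n}P$ is $H^{d}(P)(\mathbf{x},x_n,y)=\sum_kc_k(\mathbf{x})x_n^ky^{d-k}$. A projective root of a binary form $g(u,v)$ is $(u_0:v_0)$ with $g(u_0,v_0)=0$, and for $g\neq0$ its multiplicity is the largest $m$ with $(v_0u-u_0v)^m$ dividing $g$; projective roots of $E_{\mathbf{x}}P$ with respect to $d$ are those of $E_{\mathbf{x}}H^d(P)$. Define $Z_{\mathbb{R}}(P,S)=\{(\mathbf{x},x_n)\in S\times\mathbb{R}: P(\mathbf{x},x_n)=0\}$ and $Z_{\mathbb{RP}^1}(P,S)=\{(\mathbf{x},(x_n:y))\in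 S\times\mathbb{RP}^1: H^{d}(P)(\mathbf{x},x_n,y)=0\}$. $P$ is delineable on $S$ if there are $k\in\mathbb{N}$ and continuous $\theta_1,\dots,\theta_k:S\to\mathbb{R}$ with $Z_{\mathbb{R}}(P,S)$ equal to the disjoint union of the graphs of the $\theta_l$, and for each $l$ an $m_l\geq1$ such that for all $\mathbf{x}\in S$, $\theta_l(\mathbf{x})$ is a root of $E_{\mathbf{x}}P$ of multiplicity $m_l$. $P$ is projectively delineable on $S$ if there are $k\in\mathbb{N}$ and continuous $\theta_1,\dots,\theta_k:S\to\mathbb{RP}^1$ with $Z_{\mathbb{RP}^1}(P,S)$ equal to the disjoint union of the graphs of the $\theta_l$, and for each $l$ an $m_l\geq1$ such that for all $\mathbf{x}\in S$, $\theta_l(\mathbf{x})$ is a projective root of $E_{\mathbf{x}}P$ (with respect to $\deg_{x_n}P$) of multiplicity $m_l$; the $\theta_l$ are the projective root functions and their graphs the projective $P$-sections. *)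

From mathcomp Require Import all_boot all_order all_algebra.
From mathcomp Require Import mpoly.
From mathcomp Require Import reals.
Set Implicit Arguments. Unset Strict Implicit. Unset Printing Implicit Defensive.
Import Order.TTheory GRing.Theory Num.Theory.
Local Open Scope ring_scope.

(* Points of R^m are functions 'I_m -> R; here m = n-1.  A polynomial
   P in R[x; x_n] is an element of {poly {mpoly R[m]}}: univariate in x_n with
   coefficients c_k(x) = P`_k in R[x_1..x_m]. *)

Definition degn (R : realType) (m : nat) (P : {poly {mpoly R[m]}}) : nat :=
  (size P).-1.

Definition evalx (R : realType) (m : nat) (x : 'I_m -> R)
  (P : {poly {mpoly R[m]}}) : {poly R} :=
  map_poly (fun c : {mpoly R[m]} => c.@[x]) P.

Definition cont_on (R : realType) (m : nat) (S : ('I_m -> R) -> Prop)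
  (f : ('I_m -> R) -> R) : Prop :=
  forall x, S x -> forall eps : R, 0 < eps -> exists2 delta : R, 0 < delta &
    forall y, S y -> (forall i, `|y i - x i| < delta) -> `|f y - f x| < eps.

Definition root_mult (R : realType) (p : {poly R}) (t : R) (mu : nat) : Prop :=
  p != 0 /\ (('X - t%:P) ^+ mu %| p) /\ ~~ (('X - t%:P) ^+ mu.+1 %| p).

Definition delineable (R : realType) (m : nat) (P : {poly {mpoly R[m]}})
  (S : ('I_m -> R) -> Prop) : Prop :=
  exists (k : nat) (theta : 'I_k -> ('I_m -> R) -> R) (mu : 'I_k -> nat),
    [/\ (forall l, cont_on S (theta l)),
        (forall x, S x -> forall t : R,
            (evalx x P).[t] = 0 <-> exists l, theta l x = t),
        (forall x, S x -> forall l l', theta l x = theta l' x -> l = l') &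
        (forall l, (1 <= mu l)%N /\
           forall x, S x -> root_mult (evalx x P) (theta l x) (mu l))].

(* ---------- Projective line RP^1 ----------
   A point of RP^1 is represented by a nonzero pair (u, v); two pairs
   represent the same point iff they are proportional. *)
Definition nonzero2 (R : realType) (p : R * R) : Prop := p <> (0, 0).

Definition proj_eq (R : realType) (p q : R * R) : Prop :=
  p.1 * q.2 = p.2 * q.1.

Definition open_punct (R : realType) (U : R * R -> Prop) : Prop :=
  (forall p, U p -> nonzero2 p) /\
  forall p, U p -> exists2 eps : R, 0 < eps &
    forall q, nonzero2 q -> `|q.1 - p.1| < eps -> `|q.2 - p.2| < eps -> U q.

Definition saturated (R : realType) (U : R * R -> Prop) : Prop :=
  forall p q, nonzero2 q -> proj_eq p q -> U p -> U q.

(* Continuity of the map x |-> class of theta x, S -> RP^1 with the quotient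
   topology: the open sets of RP^1 correspond exactly to the saturated open
   subsets of R^2 \ {0}; we require their preimages to be open in S. *)
Definition proj_cont_on (R : realType) (m : nat) (S : ('I_m -> R) -> Prop)
  (theta : ('I_m -> R) -> R * R) : Prop :=
  forall U, open_punct U -> saturated U ->
  forall x, S x -> U (theta x) -> exists2 delta : R, 0 < delta &
    forall y, S y -> (forall i, `|y i - x i| < delta) -> U (theta y).

(* The binary form H^d(p)(u,v) = sum_k p_k u^k v^(d-k), as an element of R[u,v]
   ('X_0 = u, 'X_1 = v). *)
Definition homogH (R : realType) (d : nat) (p : {poly R}) : {mpoly R[2]} :=
  \sum_(k < d.+1) p`_k *: ('X_(0 : 'I_2) ^+ k * 'X_(1 : 'I_2) ^+ (d - k)).

Definition pt2 (R : realType) (p : R * R) : 'I_2 -> R :=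
  fun i => if val i == 0%N then p.1 else p.2.

Definition mpdvd (R : realType) (a b : {mpoly R[2]}) : Prop :=
  exists c : {mpoly R[2]}, b = c * a.

Definition proj_root_mult (R : realType) (g : {mpoly R[2]}) (p : R * R)
  (mu : nat) : Prop :=
  let L := p.2 *: 'X_(0 : 'I_2) - p.1 *: 'X_(1 : 'I_2) in
  g != 0 /\ mpdvd (L ^+ mu) g /\ ~ mpdvd (L ^+ mu.+1) g.

Definition proj_delineable (R : realType) (m : nat) (P : {poly {mpoly R[m]}})
  (S : ('I_m -> R) -> Prop) : Prop :=
  exists (k : nat) (theta : 'I_k -> ('I_m -> R) -> R * R) (mu : 'I_k -> nat),
    [/\ (forall l x, S x -> nonzero2 (theta l x)),
        (forall l, proj_cont_on S (theta l)),
        (forall x, S x -> forall q : R * R, nonzero2 q ->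
            ((homogH (degn P) (evalx x P)).@[pt2 q] = 0 <->
             exists l, proj_eq (theta l x) q)),
        (forall x, S x -> forall l l', proj_eq (theta l x) (theta l' x) -> l = l') &
        (forall l, (1 <= mu l)%N /\
           forall x, S x ->
             proj_root_mult (homogH (degn P) (evalx x P)) (theta l x) (mu l))].

(* For x in S the binary form H^d(E_x P)(u, v) = v^d (E_x P)(u/v) has the same
   finite roots (u : v), v != 0, as E_x P, with the same multiplicities, so affine
   root functions t and finite projective root functions (u : v) correspond via
   t |-> (t : 1) and (u : v) |-> u/v; the open cones |u - t v| < eps |v| show that
   this preserves continuity.  The hypothesis says that E_x P has degree exactly
   d - k, i.e. H^d(E_x P) = v^k H^(d-k)(E_x P) with H^(d-k)(E_x P) nonzero at
   (1 : 0).  So for k = 0 no projective root lies at infinity, while for k > 0 the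
   point at infinity is a root of constant multiplicity k over all of S; as it is
   isolated from the finite roots, the index of the root function passing through
   it is locally constant, and discarding it leaves continuous finite root
   functions. *)

From mathcomp Require Import all_boot all_order all_algebra perm.
From mathcomp Require Import mpoly.
From mathcomp Require Import reals ring lra zify.
From Stdlib Require Import Classical.
Import Order.TTheory GRing.Theory Num.Theory.
Local Open Scope ring_scope.
Set Implicit Arguments. Unset Strict Implicit.

Section Homogenization.
Variable R : realType.
Implicit Types (p q : {poly R}) (d e : nat).
Local Notation U := ('X_(0 : 'I_2) : {mpoly R[2]}).
Local Notation V := ('X_(1 : 'I_2) : {mpoly R[2]}).

Local Notation dehomogenize :=
  (mmap (@polyC R) (fun i : 'I_2 => if val i == 0%N then 'X else 1)).

Lemma mmap_homogH (T : comNzRingType) (f : {rmorphism R -> T}) (h : 'I_2 -> T) d p :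
  mmap f h (homogH d p) = \sum_(k < d.+1) f p`_k * (h 0 ^+ k * h 1 ^+ (d - k)).
Proof.
rewrite raddf_sum; apply: eq_bigr => k _ /=.
by rewrite mmapZ (rmorphM (mmap f h)) !(rmorphXn (mmap f h)) /= !mmapX !mmap1U.
Qed.

Lemma homogHK d p : (size p <= d.+1)%N -> dehomogenize (homogH d p) = p.
Proof.
move=> sp; rewrite mmap_homogH /=.
under eq_bigr do rewrite expr1n mulr1 mul_polyC.
rewrite -poly_def; apply/polyP => i; rewrite coef_poly.
by case: ltnP => // hi; rewrite nth_default // (leq_trans sp).
Qed.

Lemma dehomogenize_linear (a b : R) :
  dehomogenize (b *: U - a *: V) = b%:P * 'X - a%:P.
Proof. by rewrite mmapB !mmapZ /= !mmapX !mmap1U /= mulr1. Qed.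

Lemma homogH_eq0 d p : (size p <= d.+1)%N -> (homogH d p == 0) = (p == 0).
Proof.
move=> sp; apply/eqP/eqP => [H0 | ->].
  by rewrite -(homogHK sp) H0 rmorph0.
by rewrite /homogH big1 // => k _; rewrite coef0 scale0r.
Qed.

Lemma homogH_eval d p (q : R * R) :
  (homogH d p).@[pt2 q] = \sum_(k < d.+1) p`_k * (q.1 ^+ k * q.2 ^+ (d - k)).
Proof. exact: (mmap_homogH idfun). Qed.

Lemma homogH_eval_finite d p (q : R * R) : q.2 != 0 -> (size p <= d.+1)%N ->
  (homogH d p).@[pt2 q] = q.2 ^+ d * p.[q.1 / q.2].
Proof.
move=> q2 sp; rewrite homogH_eval (horner_coef_wide _ sp) mulr_sumr.
apply: eq_bigr => k _; have kd : (k <= d)%N by rewrite -ltnS.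
have -> : q.2 ^+ d = q.2 ^+ (d - k) * q.2 ^+ k by rewrite -exprD subnK.
by rewrite expr_div_n; field; rewrite expf_neq0.
Qed.

Lemma homogH_eval_infinity d p (a : R) :
  (homogH d p).@[pt2 (a, 0)] = p`_d * a ^+ d.
Proof.
rewrite homogH_eval big_ord_recr /= subnn expr0 mulr1 big1 ?add0r // => k _.
by rewrite expr0n subn_eq0 leqNgt ltn_ord /= !mulr0.
Qed.

Lemma homogHSV e q : (size q <= e.+1)%N -> homogH e.+1 q = homogH e q * V.
Proof.
move=> sq; rewrite /homogH big_ord_recr /= [q`_e.+1]nth_default // scale0r addr0.
rewrite mulr_suml; apply: eq_bigr => k _ /=; have ke : (k <= e)%N by rewrite -ltnS.
by rewrite -scalerAl subSn // exprSr mulrA.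
Qed.

Lemma homogH_mulVn e n q : (size q <= e.+1)%N ->
  homogH (e + n) q = homogH e q * V ^+ n.
Proof.
move=> sq; elim: n => [|n IH]; first by rewrite addn0 mulr1.
rewrite addnS homogHSV ?IH ?exprSr ?mulrA //.
by rewrite (leq_trans sq) // ltnS leq_addr.
Qed.

Lemma homogH_mulXsubC e q (t : R) : (size q <= e.+1)%N ->
  homogH e.+1 (q * ('X - t%:P)) = homogH e q * (U - t *: V).
Proof.
move=> sq; rewrite /homogH.
under eq_bigr do rewrite mulrBr coefB coefMX coefMC scalerBl.
rewrite sumrB mulrBr !mulr_suml; congr (_ - _).
  rewrite big_ord_recl /= scale0r add0r; apply: eq_bigr => i _ /=.
  rewrite /bump /= add1n subSS -scalerAl exprS add0n; congr (_ *: _); ring.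
rewrite (big_ord_recr e.+1) /= [q`_e.+1]nth_default // mul0r scale0r addr0.
apply: eq_bigr => i _ /=; have ie : (i <= e)%N by rewrite -ltnS.
by rewrite -scalerAr -scalerAl scalerA subSn // exprSr [t * _]mulrC mulrA.
Qed.

Lemma homogH_mul_exp_XsubC e n q (t : R) : (size q <= e.+1)%N ->
  homogH (e + n) (q * ('X - t%:P) ^+ n) = homogH e q * (U - t *: V) ^+ n.
Proof.
move=> sq; elim: n => [|n IH]; first by rewrite addn0 !mulr1.
rewrite addnS !exprSr !mulrA homogH_mulXsubC ?IH //.
rewrite (leq_trans (size_polyMleq _ _)) // size_exp_XsubC addnS /=.
by rewrite -addSn leq_add2r.
Qed.

(* Forward by homogenizing the cofactor, backward by dehomogenizing. *)
Lemma dvdp_exp_XsubC_homogH d p (a b : R) n : b != 0 -> p != 0 ->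
  (size p <= d.+1)%N ->
  (('X - (a / b)%:P) ^+ n %| p) <-> mpdvd ((b *: U - a *: V) ^+ n) (homogH d p).
Proof.
move=> b0 p0 sp; split => [dvd_p | [c Hc]].
  have /dvdpP[q Hq] := dvd_p.
  have n_le : (n <= d)%N.
    by rewrite -ltnS (leq_trans _ sp) // -(size_exp_XsubC n (a / b)) dvdp_leq.
  have sq : (size q <= (d - n).+1)%N.
    have q0 : q != 0 by apply: contra p0; rewrite Hq => /eqP ->; rewrite mul0r.
    move: sp; rewrite Hq size_Mmonic ?monic_exp ?monicXsubC // size_exp_XsubC.
    by rewrite addnS -subSn // leq_subRL ?(leqW n_le) // addnC.
  exists (b ^- n *: homogH (d - n) q).
  have -> : b *: U - a *: V = b *: (U - (a / b) *: V).
    by rewrite scalerBr scalerA mulrC divfK.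
  rewrite -{1}(subnK n_le) Hq homogH_mul_exp_XsubC // exprZn.
  by rewrite -scalerAl -scalerAr scalerA mulVf ?scale1r // expf_neq0.
move/(congr1 dehomogenize): Hc.
rewrite homogHK // (rmorphM dehomogenize) (rmorphXn dehomogenize) /=.
rewrite dehomogenize_linear => ->.
have -> : b%:P * 'X - a%:P = b%:P * ('X - (a / b)%:P) :> {poly R}.
  by rewrite mulrBr -polyCM mulrC mulrCA divff // mulr1 mulrC.
by rewrite exprMn mulrA dvdp_mull.
Qed.

Lemma root_mult_homogH d p (a b : R) n : b != 0 -> (size p <= d.+1)%N ->
  root_mult p (a / b) n <-> proj_root_mult (homogH d p) (a, b) n.
Proof.
move=> b0 sp; rewrite /root_mult /proj_root_mult /= homogH_eq0 //.
split=> -[p0 [dvd_n ndvd_Sn]]; have dvdE k := @dvdp_exp_XsubC_homogH d p a b k b0 p0 sp.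
  by split=> //; split=> [|/dvdE]; [apply/dvdE | rewrite (negbTE ndvd_Sn)].
by split=> //; split; [apply/dvdE | apply/negP => /dvdE].
Qed.

Lemma mpdvd_exp_leq (g L : {mpoly R[2]}) i j : (j <= i)%N ->
  mpdvd (L ^+ i) g -> mpdvd (L ^+ j) g.
Proof.
by move=> ji [c ->]; exists (c * L ^+ (i - j)); rewrite -mulrA -exprD subnK.
Qed.

Lemma proj_root_mult_uniq (g : {mpoly R[2]}) (r : R * R) i j :
  proj_root_mult g r i -> proj_root_mult g r j -> i = j.
Proof.
move=> [_ [dvd_i ndvd_i]] [_ [dvd_j ndvd_j]].
case: (ltngtP i j) => // ij.
  by case: ndvd_i; apply: mpdvd_exp_leq dvd_j.
by case: ndvd_j; apply: mpdvd_exp_leq dvd_i.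
Qed.

(* If p_(d-k) != 0 is the leading coefficient, H^d(p) = H^(d-k)(p) v^k and
   H^(d-k)(p) does not vanish at (1 : 0). *)
Lemma proj_root_mult_homogH_infinity d k p (a : R) : a != 0 -> (k <= d)%N ->
  (size p <= (d - k).+1)%N -> p`_(d - k) != 0 ->
  proj_root_mult (homogH d p) (a, 0) k.
Proof.
move=> a0 kd sp pk; rewrite /proj_root_mult /= scale0r sub0r -scaleNr.
have p0 : p != 0 by apply: contra pk => /eqP ->; rewrite coef0.
have sp' : (size p <= d.+1)%N by rewrite (leq_trans sp) // ltnS leq_subr.
have HE : homogH d p = homogH (d - k) p * V ^+ k by rewrite -homogH_mulVn // subnK.
have Vk0 : V ^+ k != 0.
  apply: expf_neq0; apply/eqP => /(congr1 (meval (pt2 ((0 : R), (1 : R))))).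
  by rewrite mevalXU meval0 /pt2 /=; apply/eqP; rewrite oner_eq0.
split; first by rewrite homogH_eq0.
split.
  exists ((- a) ^- k *: homogH (d - k) p).
  rewrite HE exprZn -scalerAl -scalerAr scalerA mulVf ?scale1r //.
  by rewrite expf_neq0 // oppr_eq0.
case=> c Hc.
have : homogH (d - k) p = ((- a) ^+ k.+1 *: c) * V.
  apply: (mulIf Vk0); rewrite -HE Hc exprZn exprSr.
  by rewrite -scalerAl -scalerAr -scalerAl -mulrA -exprS.
move/(congr1 (meval (pt2 ((1 : R), (0 : R))))).
rewrite homogH_eval_infinity mevalM mevalXU /pt2 /= mulr0 expr1n mulr1.
by move/eqP; rewrite (negbTE pk).
Qed.

End Homogenization.

Section ProjectiveLine.
Variable R : realType.
Implicit Types (p q : R * R) (a t : R).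

Lemma proj_eq_sym p q : proj_eq p q -> proj_eq q p.
Proof. by rewrite /proj_eq => e; rewrite mulrC -e mulrC. Qed.

Lemma proj_eq_finite p q : nonzero2 q -> proj_eq p q -> p.2 != 0 -> q.2 != 0.
Proof.
case: q => u v nz e p2 /=; apply/eqP => v0; apply: nz; move: e.
rewrite /proj_eq /= v0 mulr0 => /esym/eqP; rewrite mulf_eq0 (negbTE p2) /=.
by move/eqP ->.
Qed.

Lemma proj_eq_ratio p q : p.2 != 0 -> q.2 != 0 ->
  proj_eq p q <-> p.1 / p.2 = q.1 / q.2.
Proof.
move=> p2 q2; rewrite /proj_eq; split => [e | /eqP].
  by apply/eqP; rewrite eqr_div // e mulrC.
by rewrite eqr_div // [q.1 * _]mulrC => /eqP.
Qed.

Lemma proj_eq_affine t q : q.2 != 0 -> proj_eq (t, 1) q <-> t = q.1 / q.2.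
Proof. by move=> q2; rewrite proj_eq_ratio ?oner_neq0 //= divr1. Qed.

Lemma proj_eq_infinity a p : a != 0 -> proj_eq p (a, 0) <-> p.2 = 0.
Proof.
move=> a0; rewrite /proj_eq /= mulr0; split => [/esym/eqP|->]; last by rewrite mul0r.
by rewrite mulf_eq0 (negbTE a0) orbF => /eqP.
Qed.

Lemma nonzero2_snd p : p.2 != 0 -> nonzero2 p.
Proof. by case: p => a b /= b0 [_ /eqP]; rewrite (negbTE b0). Qed.

Lemma nonzero2_infinity a : a != 0 -> nonzero2 (a, 0).
Proof. by move=> a0 [] /eqP; rewrite (negbTE a0). Qed.

Lemma nonzero2_fst p : nonzero2 p -> p.2 = 0 -> p.1 != 0.
Proof. by case: p => a b nz /= b0; apply/eqP => a0; apply: nz; rewrite a0 b0. Qed.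

(* The points of RP^1 whose affine coordinate u/v lies within eps of t;
   written without division so that it is visibly open in R^2 \ {0}. *)
Definition chart_ball t (eps : R) q := `|q.1 - t * q.2| < eps * `|q.2|.

Lemma chart_ball_finite t eps q : chart_ball t eps q -> q.2 != 0.
Proof.
rewrite /chart_ball => h; apply/eqP => q2; move: h.
by rewrite q2 normr0 !mulr0 normr_lt0.
Qed.

Lemma chart_ballE t eps q : q.2 != 0 ->
  chart_ball t eps q = (`|q.1 / q.2 - t| < eps).
Proof.
move=> q2; rewrite /chart_ball -[q.1 in LHS](divfK q2) -mulrBl normrM.
by rewrite ltr_pM2r ?normr_gt0.
Qed.

Lemma saturated_chart_ball t eps : saturated (chart_ball t eps).
Proof.
move=> p q nzq e pB; have p2 := chart_ball_finite pB.
have q2 := proj_eq_finite nzq e p2.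
by rewrite chart_ballE // -(proj_eq_ratio p2 q2).1 // -chart_ballE.
Qed.

Lemma open_chart_ball t eps : open_punct (chart_ball t eps).
Proof.
split=> [p /chart_ball_finite p2 p0 | p pB]; first by rewrite p0 eqxx in p2.
have p2 := chart_ball_finite pB.
have eps_gt0 : 0 < eps.
  by rewrite -(@pmulr_lgt0 _ `|p.2|) ?normr_gt0 // (le_lt_trans _ pB).
set c := eps * `|p.2| - `|p.1 - t * p.2|.
have c_gt0 : 0 < c by rewrite subr_gt0.
have K0 : 0 < 1 + eps + `|t| by rewrite ltr_wpDr // addr_gt0.
exists (c / (2 * (1 + eps + `|t|))); first by rewrite divr_gt0 // mulr_gt0.
move=> q _; set dl := c / _ => h1 h2; rewrite /chart_ball.
have hdl : dl + eps * dl + `|t| * dl = c / 2 by rewrite /dl; field; rewrite lt0r_neq0.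
have n1 : `|q.1 - t * q.2| <= `|p.1 - t * p.2| + `|q.1 - p.1| + `|t| * `|q.2 - p.2|.
  have -> : q.1 - t * q.2 = (p.1 - t * p.2) + (q.1 - p.1) - t * (q.2 - p.2) by ring.
  by rewrite (le_trans (ler_normB _ _)) // normrM lerD2r ler_normD.
have n2 : `|p.2| <= `|q.2| + `|q.2 - p.2|.
  by rewrite (le_trans _ (ler_normB _ _)) // opprB addrC subrK.
have n3 : eps * `|p.2| <= eps * `|q.2| + eps * `|q.2 - p.2|.
  by rewrite -mulrDr ler_wpM2l // ltW.
have n4 : eps * `|q.2 - p.2| <= eps * dl by rewrite ler_wpM2l // ltW.
have n5 : `|t| * `|q.2 - p.2| <= `|t| * dl by rewrite ler_wpM2l // ltW.
rewrite /c in hdl c_gt0; clearbody dl; lra.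
Qed.

End ProjectiveLine.

Section Neighbourhoods.
Variables (R : realType) (m : nat) (S : ('I_m -> R) -> Prop).
Implicit Types (x y : 'I_m -> R) (A B : ('I_m -> R) -> Prop).

Definition near x A := exists2 delta : R, 0 < delta &
  forall y, S y -> (forall i, `|y i - x i| < delta) -> A y.

Lemma near_self x A : S x -> near x A -> A x.
Proof. by move=> Sx [d d0]; apply=> // i; rewrite subrr normr0. Qed.

Lemma nearW x A B : (forall y, S y -> A y -> B y) -> near x A -> near x B.
Proof. by move=> AB [d d0 h]; exists d => // y Sy hy; apply/AB/h. Qed.

Lemma near_and x A B : near x A -> near x B -> near x (fun y => A y /\ B y).
Proof.
case=> [d1 d10 h1] [d2 d20 h2]; exists (Num.min d1 d2); first by rewrite lt_min d10.
by move=> y Sy hy; split; [apply: h1 | apply: h2] => // i;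
  have := hy i; rewrite lt_min => /andP[].
Qed.

Lemma near_all K x (A : 'I_K -> ('I_m -> R) -> Prop) :
  (forall l, near x (A l)) -> near x (fun y => forall l, A l y).
Proof.
move=> hA; suff /(_ K) : forall n, near x (fun y => forall l : 'I_K, (l < n)%N -> A l y).
  by apply: nearW => y _ h l; apply: h.
elim=> [|n IH]; first by exists 1.
have [nK | Kn] := ltnP n K; last first.
  by apply: nearW IH => y _ h l _; apply/h/(leq_trans (ltn_ord l)).
apply: nearW (near_and IH (hA (Ordinal nK))) => y _ [h1 h2] l.
rewrite ltnS leq_eqVlt => /orP[/eqP e|]; last exact: h1.
by rewrite (_ : l = Ordinal nK) //; apply: val_inj.
Qed.

Lemma proj_cont_on_const c : proj_cont_on S (fun _ => c).
Proof. by move=> U _ _ x _ Ux; exists 1. Qed.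

Lemma proj_cont_on_affine f : cont_on S f -> proj_cont_on S (fun x => (f x, 1)).
Proof.
move=> cf U [_ Uopen] _ x Sx /Uopen[e e0 he].
apply: nearW (cf x Sx e e0) => y _ fy; apply: he => //=.
  exact/nonzero2_snd/oner_neq0.
by rewrite subrr normr0.
Qed.

Lemma proj_cont_on_locally K (th : 'I_K -> ('I_m -> R) -> R * R) f :
  (forall l, proj_cont_on S (th l)) ->
  (forall x, S x -> exists l, near x (fun y => f y = th l y)) ->
  proj_cont_on S f.
Proof.
move=> cth loc U Uopen Usat x Sx Ufx; have [l fth] := loc x Sx.
have Uthx : U (th l x) by rewrite -(near_self Sx fth).
by apply: nearW (near_and fth (cth l U Uopen Usat x Sx Uthx)) => y _ [-> ].
Qed.

Section Ratio.
Variable th : ('I_m -> R) -> R * R.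
Hypothesis th_cont : proj_cont_on S th.

Lemma near_chart_ball x eps : S x -> (th x).2 != 0 -> 0 < eps ->
  near x (fun y => chart_ball ((th x).1 / (th x).2) eps (th y)).
Proof.
move=> Sx x2 e0.
apply: (th_cont (open_chart_ball ((th x).1 / (th x).2) eps)
  (@saturated_chart_ball _ _ _) Sx).
by rewrite chart_ballE // subrr normr0.
Qed.

Lemma near_finite x : S x -> (th x).2 != 0 -> near x (fun y => (th y).2 != 0).
Proof.
move=> Sx x2; apply: nearW (near_chart_ball Sx x2 ltr01) => y _.
exact: chart_ball_finite.
Qed.

Lemma cont_on_ratio : (forall x, S x -> (th x).2 != 0) ->
  cont_on S (fun x => (th x).1 / (th x).2).
Proof.
move=> th_fin x Sx eps e0; apply: nearW (near_chart_ball Sx (th_fin x Sx) e0).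
by move=> y Sy; rewrite chart_ballE ?th_fin.
Qed.

End Ratio.

End Neighbourhoods.

Section Delineation.
Variables (R : realType) (m : nat) (S : ('I_m -> R) -> Prop).
Variable P : {poly {mpoly R[m]}}.
Implicit Types (x : 'I_m -> R) (q : R * R).
Local Notation d := (degn P).
Local Notation H x := (homogH (degn P) (evalx x P)).

Lemma coef_evalx x i : (evalx x P)`_i = (P`_i).@[x].
Proof. by rewrite /evalx coef_map_id0 // meval0. Qed.

Lemma size_evalx x : (size (evalx x P) <= d.+1)%N.
Proof. by rewrite /evalx map_polyE (leq_trans (size_Poly _)) // size_map leqSpred. Qed.

Lemma homogH_evalx_root_finite x q : q.2 != 0 ->
  (H x).@[pt2 q] = 0 <-> (evalx x P).[q.1 / q.2] = 0.
Proof.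
move=> q2; rewrite homogH_eval_finite ?size_evalx //.
by split=> [/eqP|->]; rewrite ?mulr0 // mulf_eq0 expf_eq0 (negbTE q2) andbF => /eqP.
Qed.

Lemma root_mult_evalx x q n : q.2 != 0 ->
  root_mult (evalx x P) (q.1 / q.2) n <-> proj_root_mult (H x) q n.
Proof. by case: q => a b /= b0; apply/root_mult_homogH/size_evalx. Qed.

(* Projective delineability with the point at infinity (1 : 0) removed from
   the fibres: all root functions are finite and only finite zeros count. *)
Definition finite_proj_delineable := exists (K : nat)
    (th : 'I_K -> ('I_m -> R) -> R * R) (mu : 'I_K -> nat),
  [/\ (forall l x, S x -> (th l x).2 != 0),
      (forall l, proj_cont_on S (th l)),
      (forall x, S x -> forall q, q.2 != 0 ->
          ((H x).@[pt2 q] = 0 <-> exists l, proj_eq (th l x) q)),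
      (forall x, S x -> forall l l', proj_eq (th l x) (th l' x) -> l = l') &
      (forall l, (1 <= mu l)%N /\
         forall x, S x -> proj_root_mult (H x) (th l x) (mu l))].

Lemma delineable_finite_proj : delineable P S <-> finite_proj_delineable.
Proof.
split=> [[K [th [mu [cth zero dis mult]]]] | [K [th [mu [fin cth zero dis mult]]]]].
  exists K, (fun l x => (th l x, 1)), mu; split.
  - by move=> l x _; apply: oner_neq0.
  - by move=> l; apply: proj_cont_on_affine.
  - move=> x Sx q q2; rewrite homogH_evalx_root_finite // zero //.
    by split=> -[l hl]; exists l; apply/proj_eq_affine.
  - move=> x Sx l l' /proj_eq_affine; rewrite /= divr1 => /(_ (oner_neq0 _)).
    exact: dis.
  - move=> l; have [mu_gt0 mult_l] := mult l; split=> // x Sx.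
    apply/(@root_mult_evalx x (th l x, 1) _ (oner_neq0 _)).
    by rewrite /= divr1; apply: mult_l.
exists K, (fun l x => (th l x).1 / (th l x).2), mu; split.
- by move=> l; apply: cont_on_ratio (cth l) _ => x; apply: fin.
- move=> x Sx t; have t2 : (t, 1).2 != 0 := oner_neq0 R.
  have := homogH_evalx_root_finite x t2; rewrite /= divr1 => <-.
  rewrite (zero x Sx _ t2).
  split=> -[l hl]; exists l; have l2 := fin l x Sx.
    by move/(proj_eq_ratio l2 t2): hl; rewrite divr1.
  by apply/(proj_eq_ratio l2 t2); rewrite /= divr1.
- move=> x Sx l l' e; apply: (dis x Sx).
  exact/(proj_eq_ratio (fin l x Sx) (fin l' x Sx)).
- move=> l; have [mu_gt0 mult_l] := mult l; split=> // x Sx.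
  by apply/(root_mult_evalx _ _ (fin l x Sx)); apply: mult_l.
Qed.

Section LeadingCoefficient.
Variable k : nat.
Hypothesis k_le : (k <= d)%N.
Hypothesis lead_coef_cond : forall x, S x ->
  (P`_(d - k)).@[x] != 0 /\ (forall j : nat, (j < k)%N -> (P`_(d - j)).@[x] = 0).

Lemma size_evalx_cond x : S x -> (size (evalx x P) <= (d - k).+1)%N.
Proof.
move=> Sx; apply/leq_sizeP => j hj; rewrite coef_evalx.
have [jd | dj] := leqP j d; last first.
  by rewrite nth_default ?meval0 // (leq_trans (leqSpred _)).
by rewrite -(subKn jd); apply: (lead_coef_cond Sx).2; lia.
Qed.

Lemma homogH_evalx_root_infinity x a : S x -> a != 0 ->
  (H x).@[pt2 (a, 0)] = 0 <-> (0 < k)%N.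
Proof.
move=> Sx a0; rewrite homogH_eval_infinity coef_evalx.
have [k0 | k_gt0] := posnP k; last first.
  by split=> // _; rewrite -[d]subn0 (lead_coef_cond Sx).2 ?mul0r.
split=> // /eqP; rewrite mulf_eq0 expf_eq0 (negbTE a0) andbF orbF.
by have := (lead_coef_cond Sx).1; rewrite k0 subn0 => /negbTE ->.
Qed.

Lemma proj_root_mult_evalx_infinity x a : S x -> a != 0 ->
  proj_root_mult (H x) (a, 0) k.
Proof.
move=> Sx a0; apply: proj_root_mult_homogH_infinity => //.
  exact: size_evalx_cond.
by rewrite coef_evalx; apply: (lead_coef_cond Sx).1.
Qed.

Lemma proj_delineable_finite : k = 0%N ->
  proj_delineable P S <-> finite_proj_delineable.
Proof.
move=> k0; split=> [[K [th [mu [nz cth zero dis mult]]]] |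
                    [K [th [mu [fin cth zero dis mult]]]]].
  have fin l x : S x -> (th l x).2 != 0.
    move=> Sx; apply/eqP => th2; have a0 := nonzero2_fst (nz l x Sx) th2.
    have /(homogH_evalx_root_infinity Sx a0) : (H x).@[pt2 ((th l x).1, 0)] = 0.
      by apply/(zero x Sx _ (nonzero2_infinity a0)); exists l; apply/proj_eq_infinity.
    by rewrite k0.
  exists K, th, mu; split=> // x Sx q q2; exact/zero/nonzero2_snd.
exists K, th, mu; split=> //.
- by move=> l x Sx; apply/nonzero2_snd/fin.
move=> x Sx [a b] nzq; have [b0 | b0] := eqVneq b 0; last exact: zero.
subst b; have a0 := nonzero2_fst nzq erefl.
rewrite homogH_evalx_root_infinity // k0; split=> // -[l /(proj_eq_infinity _ a0)].
by move/eqP; rewrite (negbTE (fin l x Sx)).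
Qed.

Section Infinity.
Hypothesis k_gt0 : (0 < k)%N.

Lemma finite_proj_delineable_infinity :
  finite_proj_delineable -> proj_delineable P S.
Proof.
case=> K [th [mu [fin cth zero dis mult]]].
pose th' (l : 'I_K.+1) x := if unlift ord_max l is Some j then th j x else (1, 0).
pose mu' (l : 'I_K.+1) := if unlift ord_max l is Some j then mu j else k.
exists K.+1, th', mu'; split.
- move=> l x Sx; rewrite /th'; case: unliftP => [j _ | _].
    exact/nonzero2_snd/fin.
  exact/nonzero2_infinity/oner_neq0.
- move=> l; rewrite /th'; case: unliftP => [j _ | _] //.
  exact: (@proj_cont_on_const _ _ S).
- move=> x Sx [a b] nzq; have [b0 | b0] := eqVneq b 0.
    subst b; have a0 := nonzero2_fst nzq erefl.
    rewrite homogH_evalx_root_infinity //; split=> // _; exists ord_max.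
    by rewrite /th' unlift_none; apply/proj_eq_infinity.
  rewrite zero //; split=> -[l hl].
    by exists (lift ord_max l); rewrite /th' liftK.
  move: hl; rewrite /th'; case: unliftP => [j _ hj | _ /proj_eq_sym]; first by exists j.
  by move/(proj_eq_infinity _ (oner_neq0 R)) => /= /eqP; rewrite (negbTE b0).
- move=> x Sx l l'; rewrite /th'.
  case: unliftP => [j -> | ->]; case: unliftP => [j' -> | ->] // e.
  + by rewrite (dis x Sx j j' e).
  + by move/(proj_eq_infinity _ (oner_neq0 R))/eqP: e; rewrite (negbTE (fin j x Sx)).
  + move/proj_eq_sym/(proj_eq_infinity _ (oner_neq0 R))/eqP: e.
    by rewrite (negbTE (fin j' x Sx)).
- move=> l; rewrite /mu' /th'; case: unliftP => [j _ | _]; first exact: mult.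
  by split=> // x Sx; apply/proj_root_mult_evalx_infinity/oner_neq0.
Qed.

Section RemoveInfinity.
Variables (K : nat) (th : 'I_K -> ('I_m -> R) -> R * R) (mu : 'I_K -> nat).
Hypothesis th_nz : forall l x, S x -> nonzero2 (th l x).
Hypothesis th_cont : forall l, proj_cont_on S (th l).
Hypothesis th_zero : forall x, S x -> forall q, nonzero2 q ->
  ((H x).@[pt2 q] = 0 <-> exists l, proj_eq (th l x) q).
Hypothesis th_disj : forall x, S x -> forall l l', proj_eq (th l x) (th l' x) -> l = l'.
Hypothesis th_mult : forall l, (1 <= mu l)%N /\
  forall x, S x -> proj_root_mult (H x) (th l x) (mu l).

Lemma infinite_section_exists x : S x -> exists l, (th l x).2 = 0.
Proof.
move=> Sx; have nz10 := nonzero2_infinity (oner_neq0 R).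
have /(th_zero Sx nz10)[l /(proj_eq_infinity _ (oner_neq0 R))] : (H x).@[pt2 (1, 0)] = 0.
  exact/(homogH_evalx_root_infinity Sx (oner_neq0 R)).
by exists l.
Qed.

Lemma infinite_section_unique x l l' : S x ->
  (th l x).2 = 0 -> (th l' x).2 = 0 -> l = l'.
Proof. by move=> Sx l2 l'2; apply: (th_disj Sx); rewrite /proj_eq l2 l'2 mulr0 mul0r. Qed.

Lemma mu_infinite_section x l : S x -> (th l x).2 = 0 -> mu l = k.
Proof.
move=> Sx l2; have a0 := nonzero2_fst (@th_nz l x Sx) l2.
have [_ mult_l] := th_mult l; apply: (proj_root_mult_uniq (mult_l x Sx)).
by rewrite [th l x]surjective_pairing l2; apply: proj_root_mult_evalx_infinity.
Qed.

Variable i0 : 'I_K.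
Hypothesis mu_i0 : mu i0 = k.

Definition infinite_index x := odflt i0 [pick l | (th l x).2 == 0].

Lemma infinite_indexP x : S x -> (th (infinite_index x) x).2 = 0.
Proof.
move=> Sx; rewrite /infinite_index; case: pickP => [l /eqP // | none].
by have [l /eqP l2] := infinite_section_exists Sx; rewrite none in l2.
Qed.

Lemma finite_section x l : S x -> l != infinite_index x -> (th l x).2 != 0.
Proof.
move=> Sx; apply: contra_neq => l2.
exact: infinite_section_unique Sx l2 (infinite_indexP Sx).
Qed.

Lemma infinite_index_locally_constant x : S x ->
  near S x (fun y => infinite_index y = infinite_index x).
Proof.
move=> Sx.
have : near S x (fun y => forall l, l != infinite_index x -> (th l y).2 != 0).
  apply: near_all => l; have [-> | ne] := eqVneq l (infinite_index x).
    by exists 1 => // y _ _; rewrite eqxx.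
  by apply: nearW (near_finite (@th_cont l) Sx (finite_section Sx ne)) => y _ h _.
apply: nearW => y Sy fin_y; apply/eqP/negPn/negP => /fin_y.
by rewrite infinite_indexP // eqxx.
Qed.

(* Swapping i0 with the index of the infinite section, then skipping i0,
   enumerates the finite sections over each x. *)
Definition relabel x := tperm i0 (infinite_index x).
Definition finite_th (j : 'I_K.-1) x := th (relabel x (lift i0 j)) x.

Lemma relabel_lift_neq x j : relabel x (lift i0 j) != infinite_index x.
Proof.
apply/eqP => /(congr1 (relabel x)); rewrite /relabel tpermK tpermR => e.
by have := neq_lift i0 j; rewrite e eqxx.
Qed.

Lemma relabel_lift_onto x l : l != infinite_index x ->
  exists j, l = relabel x (lift i0 j).
Proof.
move=> ne; have : i0 != relabel x l.
  by apply: contra_neq ne => /(congr1 (relabel x)); rewrite /relabel tpermK tpermL.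
by case/unlift_some => j ej _; exists j; rewrite -ej /relabel tpermK.
Qed.

Lemma mu_relabel x j : S x -> mu (relabel x (lift i0 j)) = mu (lift i0 j).
Proof.
move=> Sx; rewrite /relabel; case: tpermP => [e | e | //].
  by have := neq_lift i0 j; rewrite e eqxx.
by rewrite e mu_i0 (mu_infinite_section Sx (infinite_indexP Sx)).
Qed.

Lemma finite_proj_delineable_sections : finite_proj_delineable.
Proof.
have fin j x : S x -> (finite_th j x).2 != 0.
  by move=> Sx; apply/finite_section/relabel_lift_neq.
exists K.-1, finite_th, (fun j => mu (lift i0 j)); split=> //.
- move=> j; apply: (proj_cont_on_locally th_cont) => x Sx.
  exists (relabel x (lift i0 j)).
  apply: nearW (infinite_index_locally_constant Sx) => y _ e.
  by rewrite /finite_th /relabel e.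
- move=> x Sx q q2; rewrite (th_zero Sx (nonzero2_snd q2)).
  split=> -[l hl]; last by exists (relabel x (lift i0 l)).
  have ne : l != infinite_index x.
    apply/eqP => el; have := proj_eq_finite (@th_nz l x Sx) (proj_eq_sym hl) q2.
    by rewrite el infinite_indexP // eqxx.
  by have [j el] := relabel_lift_onto ne; exists j; rewrite /finite_th -el.
- by move=> x Sx j j' /(th_disj Sx) /perm_inj /lift_inj.
- move=> j; have [mu_gt0 _] := th_mult (lift i0 j); split=> // x Sx.
  by rewrite -(mu_relabel j Sx); apply: (proj2 (th_mult _)).
Qed.

End RemoveInfinity.

Lemma proj_delineable_infinity : proj_delineable P S <-> finite_proj_delineable.
Proof.
split=> [[K [th [mu [nz cth zero dis mult]]]] | ];
  last exact: finite_proj_delineable_infinity.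
have [[x0 Sx0] | S0] := classic (exists x, S x); last first.
  exists 0%N, (fun _ _ => (0, 1)), (fun _ => 0%N).
  by split=> [[] | [] | x Sx | x Sx | []] //; case: S0; exists x.
have [i0 i0_2] := infinite_section_exists zero Sx0.
have mu_i0 := mu_infinite_section nz mult Sx0 i0_2.
exact: (finite_proj_delineable_sections nz cth zero dis mult mu_i0).
Qed.

End Infinity.

End LeadingCoefficient.

End Delineation.

Theorem mainTheorem5 (R : realType) (m : nat) (S : ('I_m -> R) -> Prop)
  (P : {poly {mpoly R[m]}}) :
  (exists2 k : nat, (k <= degn P)%N &
     forall x, S x ->
       (P`_(degn P - k)).@[x] != 0 /\
       (forall j : nat, (j < k)%N -> (P`_(degn P - j)).@[x] = 0)) ->
  (proj_delineable P S <-> delineable P S).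
Proof.
case=> k k_le lead_coef_cond.
apply: (iff_trans _ (iff_sym (delineable_finite_proj S P))).
have [k0 | k_gt0] := posnP k.
  exact: proj_delineable_finite lead_coef_cond k0.
exact: proj_delineable_infinity k_le lead_coef_cond k_gt0.
Qed.
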